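(* Let $\widetilde{\mathbb{F}}$ be a field of characteristic $p>2$, let $q=p^\ell$ with $\ell\geq 1$, and let $f:\mathbb{F}_q\to\widetilde{\mathbb{F}}$ be an SD-map. Then $f$ is a field isomorphism of $\mathbb{F}_q$ onto a copy of $\mathbb{F}_q$ (i.e.\ a field automorphism of $\mathbb{F}_q$ up to this identification), except when $q=p=5$, in which case $f$ may alternatively be (and can only otherwise be) the map $w\mapsto w^3$, where $\mathbb{F}_5$ is identified with the prime subfield of $\widetilde{\mathbb{F}}$.
   Context: $\mathbb{F}_q$ is the finite field with $q$ elements. A map $f:\mathbb{F}\to\widetilde{\mathbb{F}}$ between fields is called an SD-map if for all $x\neq y$ in $\mathbb{F}$ one has $f(x)\neq f(y)$ and \[ f\left(\frac{x+y}{x-y}\right)=\frac{f(x)+f(y)}{f(x)-f(y)}. \] *)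

From HB Require Import structures.
From mathcomp Require Import all_boot all_order all_algebra all_field.
Set Implicit Arguments. Unset Strict Implicit. Unset Printing Implicit Defensive.
Import GRing.Theory.
Local Open Scope ring_scope.

Definition SD_map (F K : fieldType) (f : F -> K) : Prop :=
  forall x y : F, x != y ->
    f x != f y /\ f ((x + y) / (x - y)) = (f x + f y) / (f x - f y).

From HB Require Import structures.
From mathcomp Require Import all_boot all_order all_algebra all_field.
From mathcomp Require Import ring zify cyclic.
Set Implicit Arguments. Unset Strict Implicit. Unset Printing Implicit Defensive.
Import GRing.Theory.
Local Open Scope ring_scope.

(* An SD-map f commutes with the Cayley transform a |-> (a + 1) / (a - 1), and
   (x + y) / (x - y) is the Cayley transform of x / y; hence f is injective, odd,
   multiplicative and fixes 0 and 1. So f maps F_q onto the q roots of X^q - X in K,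
   which makes K contain a copy s(F_q) of F_q, and f x = s (x ^ k) for some
   0 < k < q - 1. The SD equation at (x, 1) becomes
   (x + 1)^k (x^k - 1) = (x - 1)^k (x^k + 1) on F_q. If 2k <= q, this is a
   polynomial identity of degree < q, and it forces (x + 1)^k = x^k + 1, so
   x |-> x^k is additive and f is a field embedding. If 2k > q, rewriting it with
   the exponent q - 1 - k and counting roots gives q = 2k - 1, and then the
   quadratic character leaves only q = 5, k = 3. *)

Definition cayley (K : fieldType) (a : K) := (a + 1) / (a - 1).

Lemma cayley_div (K : fieldType) (x y : K) : y != 0 -> (x + y) / (x - y) = cayley (x / y).
Proof.
move=> y0; rewrite /cayley; set t := x / y.
rewrite -[x](divfK y0) -/t -{2 4}[y]mul1r -mulrDl -mulrBl.
by rewrite invfM mulrACA divff ?mulr1.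
Qed.

Lemma cayley_inj (K : fieldType) (a b : K) : (2%:R : K) != 0 -> a != 1 -> b != 1 ->
  cayley a = cayley b -> a = b.
Proof.
rewrite /cayley => two_nz a1 b1 /eqP; rewrite eqr_div ?subr_eq0 // => /eqP e.
have : 2%:R * (b - a) = 0.
  have -> : 2%:R * (b - a) = (a + 1) * (b - 1) - (b + 1) * (a - 1) by ring.
  by rewrite e subrr.
by move/eqP; rewrite mulf_eq0 (negbTE two_nz) subr_eq0 => /eqP.
Qed.

Section SDMapAlgebra.
Variables (F K : fieldType) (f : F -> K).
Hypotheses (sd : SD_map f) (two_F : (2%:R : F) != 0) (two_K : (2%:R : K) != 0).

Lemma SD_map_neq x y : x != y -> f x != f y.
Proof. by case/sd. Qed.

Lemma SD_map_inj : injective f.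
Proof. by move=> x y fxy; apply/eqP; apply: contraT => /SD_map_neq; rewrite fxy eqxx. Qed.

(* The SD equation at (1, 0) and at (-1, 0) computes f 1 in two ways. *)
Lemma SD_map0 : f 0 = 0.
Proof.
have sd0 x : x != 0 -> f 1 = (f x + f 0) / (f x - f 0).
  move=> x0; have [_] := sd x0.
  by rewrite addr0 subr0 divff.
have N10 : (-1 : F) != 0 by rewrite oppr_eq0 oner_neq0.
have N11 : f 1 != f (-1).
  apply: SD_map_neq; apply: contra two_F => /eqP e.
  by rewrite mulr2n {1}e addNr.
have := sd0 _ (oner_neq0 F); rewrite {1}(sd0 _ N10) => /eqP.
rewrite eqr_div ?subr_eq0 ?SD_map_neq ?oner_neq0 // => /eqP e.
have : 2%:R * f 0 * (f 1 - f (-1)) = 0.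
  have -> : 2%:R * f 0 * (f 1 - f (-1)) =
      (f (-1) + f 0) * (f 1 - f 0) - (f 1 + f 0) * (f (-1) - f 0) by ring.
  by rewrite e subrr.
by move/eqP; rewrite !mulf_eq0 (negbTE two_K) subr_eq0 (negbTE N11) orbF => /eqP.
Qed.

Lemma SD_map1 : f 1 = 1.
Proof.
have [f10] := sd (oner_neq0 F).
by rewrite addr0 subr0 divff ?oner_neq0 // SD_map0 addr0 subr0 divff // -SD_map0.
Qed.

Lemma SD_mapN x : f (- x) = - f x.
Proof.
have [->|x0] := eqVneq x 0; first by rewrite oppr0 SD_map0 oppr0.
have xNx : x != - x.
  apply: contra x0 => /eqP xNx.
  have : 2%:R * x = 0 by rewrite mulr2n mulrDl mul1r {1}xNx addNr.
  by move/eqP; rewrite mulf_eq0 (negbTE two_F).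
have [fxN] := sd xNx; rewrite subrr mul0r SD_map0 => /esym/eqP.
rewrite mulf_eq0 invr_eq0 subr_eq0 (negbTE fxN) orbF addr_eq0.
by move/eqP ->; rewrite opprK.
Qed.

Lemma SD_map_cayley x : f (cayley x) = cayley (f x).
Proof.
have [->|x1] := eqVneq x 1; first by rewrite SD_map1 /cayley !subrr !invr0 !mulr0 SD_map0.
by have [_] := sd x1; rewrite SD_map1.
Qed.

Lemma SD_map_div x y : f (x / y) = f x / f y.
Proof.
have [->|y0] := eqVneq y 0; first by rewrite SD_map0 !invr0 !mulr0 SD_map0.
have fy0 : f y != 0 by rewrite -SD_map0 SD_map_neq.
have [->|xy] := eqVneq x y; first by rewrite !divff ?SD_map1.
have [fxy] := sd xy; rewrite !cayley_div // SD_map_cayley.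
have div_neq1 (R : fieldType) (a b : R) : b != 0 -> a != b -> a / b != 1.
  by move=> b0; apply: contra => /eqP ab1; rewrite -(divfK b0 a) ab1 mul1r.
apply: cayley_inj => //; last exact: div_neq1.
by rewrite -SD_map1 SD_map_neq // div_neq1.
Qed.

Lemma SD_mapM x y : f (x * y) = f x * f y.
Proof.
have fV z : f z^-1 = (f z)^-1 by rewrite -div1r SD_map_div SD_map1 div1r.
by rewrite -[y]invrK SD_map_div !fV invrK.
Qed.

Lemma SD_mapX x n : f (x ^+ n) = f x ^+ n.
Proof. by elim: n => [|n IHn]; rewrite ?SD_map1 // !exprS SD_mapM IHn. Qed.

Lemma SD_map_shift x : f (x + 1) * (f x - 1) = f (x - 1) * (f x + 1).
Proof.
have [->|x1] := eqVneq x 1; first by rewrite subrr SD_map0 SD_map1 subrr mulr0 mul0r.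
have fx1 : f x - 1 != 0 by rewrite subr_eq0 -SD_map1 SD_map_neq.
have fx1' : f (x - 1) != 0 by rewrite -SD_map0 SD_map_neq // subr_eq0.
have := SD_map_cayley x; rewrite /cayley SD_map_div => /eqP.
by rewrite eqr_div // => /eqP ->; rewrite mulrC.
Qed.

End SDMapAlgebra.

Lemma rmorph_exists (R S : pzRingType) (f : R -> S) :
  zmod_morphism f -> monoid_morphism f -> exists g : {rmorphism R -> S}, f =1 g.
Proof.
move=> fB fM; pose g : {rmorphism R -> S} := HB.pack f
  (GRing.isZmodMorphism.Build _ _ _ fB) (GRing.isMonoidMorphism.Build _ _ _ fM).
by exists g.
Qed.

Section FactorRMorph.
Variables (A B C : pzRingType) (phi : {rmorphism A -> B}) (psi : {rmorphism A -> C}).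
Variable phi_inv : B -> A.
Hypotheses (phiK : cancel phi_inv phi) (ker_phi_psi : forall a, phi a = 0 -> psi a = 0).

Definition factor_rmorph (b : B) : C := psi (phi_inv b).

Lemma factor_rmorphE a : factor_rmorph (phi a) = psi a.
Proof.
apply/eqP; rewrite -subr_eq0 -rmorphB; apply/eqP/ker_phi_psi.
by rewrite rmorphB phiK subrr.
Qed.

Lemma factor_rmorph_is_zmod_morphism : zmod_morphism factor_rmorph.
Proof. by move=> x y; rewrite -[x]phiK -[y]phiK -rmorphB !factor_rmorphE rmorphB. Qed.

Lemma factor_rmorph_is_monoid_morphism : monoid_morphism factor_rmorph.
Proof.
split; first by rewrite -(rmorph1 phi) factor_rmorphE rmorph1.
by move=> x y; rewrite -[x]phiK -[y]phiK -rmorphM !factor_rmorphE rmorphM.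
Qed.

Lemma rmorph_factor : exists g : {rmorphism B -> C}, forall a, g (phi a) = psi a.
Proof.
have [g gE] := rmorph_exists factor_rmorph_is_zmod_morphism
  factor_rmorph_is_monoid_morphism.
by exists g => a; rewrite -gE factor_rmorphE.
Qed.

End FactorRMorph.

Lemma unit_expf_card (F : finFieldType) (x : F) : x != 0 -> x ^+ #|F|.-1 = 1.
Proof.
move=> x0; apply: (mulfI x0); rewrite mulr1 -exprS prednK ?expf_card //.
by apply/card_gt0P; exists x.
Qed.

Lemma finField_prim_root (F : finFieldType) : exists g : F, (#|F|.-1).-primitive_root g.
Proof.
have q1_gt0 : (0 < #|F|.-1)%N.
  by rewrite -(cardC1 (0 : F)); apply/card_gt0P; exists 1; rewrite !inE oner_neq0.
have := @has_prim_root F #|F|.-1 (enum (predC1 0)) q1_gt0.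
rewrite enum_uniq -cardE cardC1 leqnn.
have -> : all (#|F|.-1).-unity_root (enum (predC1 (0 : F))).
  by apply/allP => x; rewrite mem_enum inE unity_rootE => /unit_expf_card ->.
by move=> /(_ isT isT isT) /hasP [g _ pg]; exists g.
Qed.

Lemma dvdp_splitting_has_root (R : fieldType) (P D : {poly R}) (rs : seq R) :
  P != 0 -> uniq rs -> all (root P) rs -> (size P <= (size rs).+1)%N ->
  D %| P -> (1 < size D)%N -> has (root D) rs.
Proof.
move=> P0 rs_uniq rsP sizeP /dvdpP [Q PQD] sizeD.
have /andP [Q0 D0] : (Q != 0) && (D != 0) by rewrite -negb_or -mulf_eq0 -PQD.
apply: contraT; rewrite -all_predC => /allP noD.
have rsQ : all (root Q) rs.
  apply/allP => x x_rs; move/allP/(_ x x_rs): rsP.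
  by rewrite PQD rootM (negbTE (noD x x_rs)) orbF.
have := max_poly_roots Q0 rsQ rs_uniq.
move: sizeP sizeD; rewrite PQD size_mul //.
case: (size D) => [|[|d]] // + _; rewrite !addnS /= ltnS => le_QD lt_Q.
by have := leq_ltn_trans le_QD lt_Q; rewrite ltnNge leq_addr.
Qed.

Section FinFieldEmbedding.
Variables (p : nat) (F : finFieldType) (K : fieldType).
Hypotheses (pF : p \in [pchar F]) (pK : p \in [pchar K]).
Variable e : F -> K.
Hypotheses (e_inj : injective e) (e_fixed : forall x, e x ^+ #|F| = e x).

(* F and K themselves, seen as 'F_p-algebras. *)
Local Notation L := (pPrimeCharType pF).
Local Notation M := (pPrimeCharType pK).

Let gam : L := xchoose (finField_prim_root F).
Let gam_prim : (#|F|.-1).-primitive_root gam := xchooseP (finField_prim_root F).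

Lemma horner_prim_root_surj (x : L) : exists P, horner_alg gam P == x.
Proof.
have [->|x0] := eqVneq x 0; first by exists 0; rewrite rmorph0.
have [i ->] := prim_rootP gam_prim (unit_expf_card x0).
by exists 'X^i; rewrite rmorphXn /= horner_algX.
Qed.

Lemma ker_horner_prim_root :
  exists2 mu : {poly 'F_p}, (1 < size mu)%N & forall P : {poly 'F_p}, horner_alg gam P = 0 -> mu %| P.
Proof.
have [mu mu_def] := polyOver1P (minPolyOver 1 gam).
exists mu => [|P P_gam].
  by rewrite -(size_map_poly (in_alg L)) -mu_def size_minPoly.
rewrite -(dvdp_map (in_alg L)) -mu_def minPoly_dvdp //; first by apply/polyOver1P; exists P.
exact/rootP.
Qed.

(* The minimal polynomial mu of gam over F_p divides X^q - X, which splits in K over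
   the image of e; a root rho of mu makes P(gam) |-> P(rho) well defined. *)
Lemma finField_embedding : inhabited {rmorphism F -> K}.
Proof.
have [mu mu_gt1 ker_mu] := ker_horner_prim_root.
have mu_XqX : mu %| 'X^#|F| - 'X.
  by apply: ker_mu; rewrite rmorphB rmorphXn /= horner_algX expf_card subrr.
have [rho rho_root] : exists rho : M, root (map_poly (in_alg M) mu) rho.
  have size_XqX : size ('X^#|F| - 'X : {poly M}) = #|F|.+1.
    by rewrite size_polyDl ?size_polyXn // size_polyN size_polyX ltnS finNzRing_gt1.
  suff /hasP [_ /mapP [x _ ->]] : has (root (map_poly (in_alg M) mu)) (map e (enum F)).
    by exists (e x).
  apply: (@dvdp_splitting_has_root _ ('X^#|F| - 'X)).
  - by rewrite -size_poly_eq0 size_XqX.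
  - by rewrite map_inj_uniq ?enum_uniq.
  - by apply/allP => _ /mapP [x _ ->]; rewrite rootE !hornerE e_fixed subrr.
  - by rewrite size_XqX size_map -cardE.
  - have /dvdpP [Q XqXE] := mu_XqX.
    apply/dvdpP; exists (map_poly (in_alg M) Q).
    by rewrite -rmorphM -XqXE rmorphB /= map_polyXn map_polyX.
  - by rewrite size_map_poly.
have ker_rho P : horner_alg gam P = 0 -> horner_alg rho P = 0.
  by move/ker_mu/dvdpP => [Q ->]; rewrite rmorphM /= [horner_alg rho mu](rootP rho_root) mulr0.
pose gam_poly x := xchoose (horner_prim_root_surj x).
have gam_polyK : cancel gam_poly (horner_alg gam).
  by move=> x; apply/eqP/(xchooseP (horner_prim_root_surj x)).
have [g _] := rmorph_factor gam_polyK ker_rho.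
have [h _] := @rmorph_exists F K g (rmorphB g) (conj (rmorph1 g) (rmorphM g)).
by constructor.
Qed.

End FinFieldEmbedding.

Lemma finField_poly_eq0 (F : finFieldType) (P : {poly F}) :
  (size P <= #|F|)%N -> (forall x, P.[x] = 0) -> P = 0.
Proof.
move=> sizeP P0; apply: (@roots_geq_poly_eq0 _ P (enum F)); rewrite ?enum_uniq -?cardE //.
by apply/allP => x _; apply/eqP/P0.
Qed.

Lemma size_subr_monic_leq (R : nzRingType) (P Q : {poly R}) n :
  P \is monic -> Q \is monic -> size P = n.+1 -> size Q = n.+1 -> (size (P - Q)%R <= n)%N.
Proof.
move=> mP mQ sP sQ; apply/leq_sizeP => j; rewrite leq_eqVlt coefB => /orP [/eqP <-|lt_nj].
  by rewrite -[n]/(n.+1.-1) -{1}sP -sQ -!lead_coefE (monicP mP) (monicP mQ) subrr.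
by rewrite !nth_default ?subrr ?sP ?sQ.
Qed.

Lemma size_XaddC1_exp_subXn (R : nzRingType) n : (size (('X + 1) ^+ n - 'X^n : {poly R})%R <= n)%N.
Proof.
have X1E : 'X + 1 = 'X - (- 1)%:P :> {poly R} by rewrite polyCN opprK.
by apply: size_subr_monic_leq; rewrite ?monicXn ?size_polyXn ?X1E ?monic_exp ?monicXsubC ?size_exp_XsubC.
Qed.

Lemma coprimep_XnD1_XnB1 (R : fieldType) n : (2%:R : R) != 0 ->
  coprimep ('X^n + 1 : {poly R}) ('X^n - 1).
Proof.
move=> two_nz; apply/Bezout_coprimepP; exists ((2%:R^-1)%:P, - (2%:R^-1)%:P) => /=.
have -> : (2%:R^-1)%:P * ('X^n + 1) + - (2%:R^-1)%:P * ('X^n - 1)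
        = (2%:R^-1 : R)%:P * (1 + 1) by ring.
by rewrite -polyC1 -polyCD -polyCM -mulr2n mulVf // eqpxx.
Qed.

Section ShiftPower.
Variables (F : finFieldType) (k : nat).
Hypotheses (two_nz : (2%:R : F) != 0) (k_lt : (k < #|F|.-1)%N).
Hypothesis pow_inj : injective (fun x : F => x ^+ k).
Hypothesis shift_pow :
  forall x : F, (x + 1) ^+ k * (x ^+ k - 1) = (x - 1) ^+ k * (x ^+ k + 1).

Lemma shift_pow_gt0 : (0 < k)%N.
Proof.
rewrite lt0n; apply/eqP => k0.
have /pow_inj/eqP : (0 : F) ^+ k = 1 ^+ k by rewrite k0 !expr0.
by rewrite eq_sym oner_eq0.
Qed.

Lemma shift_pow_odd : odd k.
Proof.
apply: contraTT two_nz => even_k.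
have : (-1 : F) ^+ k = 1 ^+ k by rewrite expr1n -signr_odd (negbTE even_k).
by move/pow_inj => N11; rewrite negbK mulr2n -{2}N11 subrr.
Qed.

Lemma shift_powN (x : F) : (- x) ^+ k = - x ^+ k.
Proof. by rewrite exprNn -signr_odd shift_pow_odd mulN1r. Qed.

(* With D(X) = (X + 1)^k - X^k - 1 and k odd, the shift identity says that
   D(X)(X^k - 1) + D(-X)(X^k + 1) vanishes on F. Its degree is below 2k <= q, so it
   is the zero polynomial, and X^k + 1 divides D, which has degree < k. *)
Lemma shift_pow_additive : (2 * k <= #|F|)%N -> forall x : F, (x + 1) ^+ k = x ^+ k + 1.
Proof.
move=> le_2k_q.
pose D : {poly F} := ('X + 1) ^+ k - 'X^k - 1.
have k_gt0 := shift_pow_gt0.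
have DE x : D.[x] = (x + 1) ^+ k - x ^+ k - 1 by rewrite !hornerE.
have size_D : (size D <= k)%N.
  apply: leq_trans (size_polyD _ _) _; rewrite size_polyN size_poly1 geq_max k_gt0 andbT.
  exact: size_XaddC1_exp_subXn.
pose Q := D * ('X^k - 1) + (D \Po - 'X) * ('X^k + 1).
have Q0 : Q = 0.
  apply: finField_poly_eq0 => [|x].
    apply: leq_trans (size_polyD _ _) _; rewrite geq_max.
    have size_Xk (c : F) : size ('X^k + c%:P) = k.+1 by rewrite size_XnaddC.
    have size_DN : size (D \Po - 'X) = size D by rewrite size_comp_poly2 ?size_polyN ?size_polyX.
    by rewrite -[1]polyC1 -[- 1%:P]polyCN !(leq_trans (size_mul_leq _ _)) //
      !size_Xk ?size_DN !addnS /= (leq_trans _ le_2k_q) // mul2n -addnn leq_add2r.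
  rewrite /Q !hornerE horner_comp !hornerE.
  have -> : - x + 1 = - (x - 1) by rewrite opprB addrC.
  rewrite !shift_powN.
  have -> : ((x + 1) ^+ k - x ^+ k - 1) * (x ^+ k - 1) + (- (x - 1) ^+ k - - x ^+ k - 1) * (x ^+ k + 1)
      = (x + 1) ^+ k * (x ^+ k - 1) - (x - 1) ^+ k * (x ^+ k + 1) by ring.
  by rewrite shift_pow subrr.
have Xk_dvd_D : ('X^k + 1) %| D.
  rewrite -(Gauss_dvdpl _ (coprimep_XnD1_XnB1 k two_nz)); apply/dvdpP; exists (- (D \Po - 'X)).
  by apply/eqP; rewrite mulNr -addr_eq0 -/Q Q0.
have D0 : D = 0.
  apply: contraTeq size_D => D_neq0; rewrite -ltnNge.
  by have := dvdp_leq D_neq0 Xk_dvd_D; rewrite -[1]polyC1 size_XnaddC.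
by move=> x; apply/eqP; rewrite -subr_eq0 opprD addrA -DE D0 horner0.
Qed.

(* On F^x, u^j = u^-k, so multiplying by ((x + 1)(x - 1)x)^k gives back the shift identity. *)
Lemma shift_pow_compl j (x : F) : (j + k)%N = #|F|.-1 -> x \notin [:: 0; 1; -1] ->
  (x + 1) ^+ j * (x ^+ j + 1) + (x - 1) ^+ j * (x ^+ j - 1) = 0.
Proof.
rewrite !inE !negb_or => jk /and3P [x0 x1 xN1].
have inv_pow (u : F) : u != 0 -> u ^+ j * u ^+ k = 1.
  by move=> u0; rewrite -exprD jk unit_expf_card.
have xD1 : x + 1 != 0 by rewrite addr_eq0.
have xB1 : x - 1 != 0 by rewrite subr_eq0.
have c0 : (x + 1) ^+ k * (x - 1) ^+ k * x ^+ k != 0 by rewrite !mulf_neq0 ?expf_neq0.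
apply: (mulIf c0); rewrite mul0r.
transitivity ((x + 1) ^+ j * (x + 1) ^+ k * (x - 1) ^+ k * (x ^+ j * x ^+ k + x ^+ k)
    + (x - 1) ^+ j * (x - 1) ^+ k * (x + 1) ^+ k * (x ^+ j * x ^+ k - x ^+ k)).
  by ring.
rewrite !inv_pow // !mul1r.
transitivity ((x - 1) ^+ k * (x ^+ k + 1) - (x + 1) ^+ k * (x ^+ k - 1)); first by ring.
by rewrite shift_pow subrr.
Qed.

(* The polynomial of shift_pow_compl has degree 2j + 1 but vanishes outside {0, 1, -1}. *)
Lemma shift_pow_large_card : (#|F| < 2 * k)%N -> #|F| = (2 * k).-1.
Proof.
move=> lt_q_2k; set q := #|F|; pose j := (q.-1 - k)%N.
have jk : (j + k = q.-1)%N by rewrite subnK // ltnW.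
pose P : {poly F} := ('X + 1) ^+ j * ('X^j + 1) + ('X - 1) ^+ j * ('X^j - 1).
have P_neq0 : P != 0.
  apply/eqP => /(congr1 (horner^~ 1)); rewrite !hornerE expr1n subrr mulr0 addr0 -exprSr.
  by move/eqP; rewrite expf_eq0 -mulr2n (negbTE two_nz) andbF.
have size_P : (size P <= (2 * j).+1)%N.
  have size_j (c : F) : (size (('X + c%:P) ^+ j * ('X^j + c%:P))%R <= (2 * j).+1)%N.
    apply: leq_trans (size_mul_leq _ _) _.
    by rewrite -[c]opprK polyCN size_exp_XsubC -polyCN size_XnaddC ?subn_gt0 //; lia.
  rewrite /P -[1]polyC1 -[- 1%:P]polyCN.
  by apply: leq_trans (size_polyD _ _) _; rewrite geq_max !size_j.
pose S := [pred x : F | x \notin [:: 0; 1; -1]].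
have rootsP : all (root P) (enum S).
  by apply/allP => x; rewrite mem_enum rootE !hornerE => /(shift_pow_compl jk) ->.
have card_S : (q - 3 <= #|S|)%N.
  rewrite /q -(cardC S) leq_subLR addnC leq_add2r.
  apply: leq_trans (card_size [:: 0; 1; -1]).
  by apply: subset_leq_card; apply/subsetP => x; rewrite !inE negbK.
have := leq_trans (max_poly_roots P_neq0 rootsP (enum_uniq _)) size_P.
rewrite -cardE; move: card_S jk lt_q_2k k_lt shift_pow_gt0; rewrite -/q -!subn1.
by move: #|S| => s; clearbody j q; clear; lia.
Qed.

Lemma shift_pow_nonsquare s (x : F) : k = s.+1 -> #|F|.-1 = (2 * s)%N ->
  x \notin [:: 0; 1; -1] -> x ^+ s = -1 -> x ^+ 2 = -1.
Proof.
rewrite !inE !negb_or => k_s q1_2s /and3P [x0 x1 xN1] xs.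
have sqr_pow_s (u : F) : u != 0 -> (u ^+ s) ^+ 2 = 1.
  by move=> u0; rewrite -exprM mulnC -q1_2s unit_expf_card.
have shift_s : (x + 1) ^+ s * (x + 1) ^+ 2 = (x - 1) ^+ s * (x - 1) ^+ 2.
  have := shift_pow x; rewrite k_s !exprSr xs => shift_x.
  transitivity (- ((x + 1) ^+ s * (x + 1) * (-1 * x - 1))); first by ring.
  by rewrite shift_x; ring.
have : (x + 1) ^+ 4 = (x - 1) ^+ 4.
  have := congr1 (fun y => y ^+ 2) shift_s.
  by rewrite /= !exprMn !sqr_pow_s ?addr_eq0 ?subr_eq0 ?opprK // !mul1r -!exprD.
move/eqP; rewrite -subr_eq0.
have -> : (x + 1) ^+ 4 - (x - 1) ^+ 4 = 2%:R * 2%:R * 2%:R * x * (x ^+ 2 + 1) by ring.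
by rewrite !mulf_eq0 (negbTE two_nz) (negbTE x0) addr_eq0 => /eqP.
Qed.

(* Here s = (q - 1) / 2, so x^s = 1 or -1. By shift_pow_nonsquare, the polynomial
   (X^s - 1)(X^2 + 1)(X + 1) vanishes on F^x, so 2s < s + 4. *)
Lemma shift_pow_half_card : #|F| = (2 * k).-1 -> k = 3%N.
Proof.
move=> q_2k; have k_gt0 := shift_pow_gt0.
have [s k_s] : exists s, k = s.+1 by exists k.-1; rewrite prednK.
have q1_2s : #|F|.-1 = (2 * s)%N by rewrite q_2k k_s; lia.
have s_gt0 : (0 < s)%N by move: k_lt; rewrite q_2k k_s; lia.
pose W : {poly F} := ('X^s - 1) * ('X^2 + 1) * ('X + 1).
have W_neq0 : W != 0.
  by rewrite monic_neq0 // /W -[1]polyC1 !monicMr ?monicXnsubC ?monicXnaddC ?monicXaddC.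
have size_W : (size W <= s + 4)%N.
  rewrite /W -[1]polyC1; apply: leq_trans (size_mul_leq _ _) _; rewrite size_XaddC.
  have := size_mul_leq ('X^s - 1%:P) ('X^2 + 1%:P : {poly F}).
  by rewrite size_XnsubC // size_XnaddC //; move: (size _) => n; lia.
have rootsW : all (root W) (enum (predC1 (0 : F))).
  apply/allP => x; rewrite mem_enum inE => x0; rewrite rootE !hornerE.
  have /eqP : (x ^+ s) ^+ 2 = 1 by rewrite -exprM mulnC -q1_2s unit_expf_card.
  rewrite sqrf_eq1 => /orP [/eqP -> | /eqP xs]; first by rewrite subrr !mul0r.
  have [->|xN1] := eqVneq x (-1); first by rewrite addNr mulr0.
  have [x1|x1] := eqVneq x 1.
    have N11 : (1 : F) = -1 by rewrite -xs x1 expr1n.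
    by move: two_nz; rewrite mulr2n {2}N11 subrr eqxx.
  by rewrite (shift_pow_nonsquare k_s) ?addNr ?mulr0 ?mul0r // !inE !negb_or x0 x1.
have := max_poly_roots W_neq0 rootsW (enum_uniq _).
rewrite -cardE cardC1 q1_2s => /leq_trans/(_ size_W) lt_2s.
have : ~~ odd s by move: shift_pow_odd; rewrite k_s.
have : [|| s == 1, s == 2 | s == 3]%N by lia.
by case/or3P => /eqP s_val; rewrite k_s s_val.
Qed.

Lemma shift_pow_dichotomy : (forall x : F, (x + 1) ^+ k = x ^+ k + 1) \/ (#|F| = 5%N /\ k = 3%N).
Proof.
have [/shift_pow_additive|/shift_pow_large_card q_2k] := leqP (2 * k) #|F|; first by left.
by right; have k3 := shift_pow_half_card q_2k; rewrite q_2k k3.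
Qed.

End ShiftPower.

Lemma exprD1_rmorph (F : fieldType) k : (0 < k)%N ->
  (forall x : F, (x + 1) ^+ k = x ^+ k + 1) -> exists g : {rmorphism F -> F}, forall x, x ^+ k = g x.
Proof.
move=> k_gt0 powD1.
have powD (x y : F) : (x + y) ^+ k = x ^+ k + y ^+ k.
  have [->|y0] := eqVneq y 0; first by rewrite addr0 expr0n gtn_eqF // addr0.
  by rewrite -{1}(divfK y0 x) -{3}[y]mul1r -mulrDl exprMn powD1 mulrDl -exprMn divfK // mul1r.
apply: rmorph_exists => [x y | ]; first by rewrite /= -{2}(subrK y x) (powD (x - y)) addrK.
by split => [|x y]; rewrite ?expr1n ?exprMn.
Qed.

Lemma finField_mulmap_pow (F : finFieldType) (K : fieldType) (s : {rmorphism F -> K}) (f : F -> K) :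
  (2 < #|F|)%N -> injective f -> f 0 = 0 -> f 1 = 1 -> {morph f : x y / x * y} ->
  exists2 k, (k < #|F|.-1)%N & forall x, f x = s (x ^+ k).
Proof.
move=> q_gt2 f_inj f0 f1 fM.
have fX x n : f (x ^+ n) = f x ^+ n by elim: n => [|n IHn]; rewrite ?f1 // !exprS fM IHn.
have [g g_prim] := finField_prim_root F.
have fg1 : f g ^+ #|F|.-1 = 1 by rewrite -fX (prim_expr_order g_prim) f1.
have sg_prim : (#|F|.-1).-primitive_root (s g) by rewrite fmorph_primitive_root.
have [[k lt_k] /= fgk] := prim_rootP sg_prim fg1.
exists k => // x; have [->|x0] := eqVneq x 0.
  rewrite f0 expr0n rmorph_nat; case: k lt_k fgk => //= _ fg1'.
  have g1 : g = 1 by apply: f_inj; rewrite fg1' f1.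
  have := eq_prim_root_expr g_prim 1 0; rewrite g1 expr1n eqxx.
  by rewrite !modn_small //; lia.
have [i ->] := prim_rootP g_prim (unit_expf_card x0).
by rewrite fX fgk -!rmorphXn -!exprM mulnC.
Qed.

Lemma eq_SD_map (F K : fieldType) (f g : F -> K) : f =1 g -> SD_map f -> SD_map g.
Proof. by move=> fg sd x y /sd; rewrite !fg. Qed.

Lemma SD_map_comp (F K L : fieldType) (g : {rmorphism K -> L}) (h : F -> K) :
  SD_map h -> SD_map (g \o h).
Proof.
move=> sd x y /sd [hxy hE] /=; rewrite (inj_eq (fmorph_inj g)) hxy.
by rewrite hE fmorph_div rmorphD rmorphB.
Qed.

Lemma card5_SD_cube (F : finFieldType) : #|F| = 5%N -> SD_map (fun x : F => x ^+ 3).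
Proof.
move=> q5; have x5 (x : F) : x ^+ 5 = x by rewrite -q5 expf_card.
have cubeK : involutive (fun x : F => x ^+ 3).
  by move=> x; rewrite -exprM -[(3 * 3)%N]/(5 + 4)%N exprD x5 -exprS x5.
move=> x y xy; have cube_xy : x ^+ 3 != y ^+ 3 by apply: contra xy => /eqP/(can_inj cubeK) ->.
split => //; rewrite expr_div_n; apply/eqP; rewrite eqr_div ?expf_neq0 ?subr_eq0 //.
rewrite -subr_eq0; apply/eqP.
transitivity (6%:R * (x ^+ 5 * y - x * y ^+ 5)); first by ring.
by rewrite !x5 subrr mulr0.
Qed.

Lemma card5_SD_rmorph_cube (F : finFieldType) (K : fieldType) (g : {rmorphism F -> K}) :
  #|F| = 5%N -> SD_map (fun x => g x ^+ 3).
Proof.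
move=> q5; apply: eq_SD_map (SD_map_comp g (card5_SD_cube q5)).
by move=> x /=; rewrite rmorphXn.
Qed.

Lemma pchar_natr2_neq0 (R : nzRingType) p : p \in [pchar R] -> (2 < p)%N -> (2%:R : R) != 0.
Proof. by move=> pR p_gt2; rewrite -(dvdn_pcharf pR) gtnNdvd. Qed.

Theorem proposition3p2 (F : finFieldType) (K : fieldType) (p l : nat)
  (f : F -> K) :
  prime p -> (2 < p)%N -> p \in [pchar K] -> (1 <= l)%N -> #|F| = (p ^ l)%N ->
  SD_map f ->
  ((exists g : {rmorphism F -> K}, forall x, f x = g x)
   \/ (#|F| = 5%N /\ exists g : {rmorphism F -> K}, forall x, f x = g x ^+ 3))
  /\ (#|F| = 5%N -> forall g : {rmorphism F -> K}, SD_map (fun x => g x ^+ 3)).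
Proof.
move=> p_prime p_gt2 pK l_gt0 card_F sd.
split; last by move=> q5 g; apply: card5_SD_rmorph_cube.
have pF : p \in [pchar F] := card_finPcharP card_F p_prime.
have [tF tK] := (pchar_natr2_neq0 pF p_gt2, pchar_natr2_neq0 pK p_gt2).
have q_gt2 : (2 < #|F|)%N.
  by rewrite card_F (leq_trans p_gt2) // -{1}(expn1 p) leq_exp2l // prime_gt1.
have f_inj := SD_map_inj sd.
have f_fixed x : f x ^+ #|F| = f x by rewrite -(SD_mapX sd tF tK) expf_card.
have [s] := finField_embedding pF pK f_inj f_fixed.
have [k k_lt fk] := finField_mulmap_pow s q_gt2 f_inj (SD_map0 sd tF tK) (SD_map1 sd tF tK)
  (SD_mapM sd tF tK).
have pow_inj : injective (fun x : F => x ^+ k) by move=> x y /= xy; apply: f_inj; rewrite !fk xy.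
have pow_shift (x : F) : (x + 1) ^+ k * (x ^+ k - 1) = (x - 1) ^+ k * (x ^+ k + 1).
  apply: (fmorph_inj s); have := SD_map_shift sd tF tK x; rewrite !fk.
  by rewrite !rmorphM !rmorphB !rmorphD !rmorph1 !rmorphXn.
have [powD1 | [q5 k3]] := shift_pow_dichotomy tF k_lt pow_inj pow_shift.
  have [g gE] := exprD1_rmorph (shift_pow_gt0 pow_inj) powD1.
  by left; exists (s \o g) => x; rewrite fk gE.
by right; split => //; exists s => x; rewrite fk k3 rmorphXn.
Qed.
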